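(* For each $n\in\mathbb{N}$ let $A_n\subseteq\mathcal{R}$ be L-measurable, and suppose $\lim_{N\to\infty}M\big(\bigcap_{n=1}^N A_n\big)$ exists in $\mathcal{R}$. Then $\bigcap_{n=1}^\infty A_n$ is L-measurable.
   Context: $\mathcal{R}$ denotes the Levi-Civita field: functions $x:\mathbb{Q}\to\mathbb{R}$ with left-finite support, with componentwise addition and formal power series multiplication, ordered by $x>0$ iff $x\ne0$ and $x[\min\operatorname{supp}x]>0$; it is a non-Archimedean ordered field extension of $\mathbb{R}$, Cauchy complete in the order topology, in which all limits and series are taken (a series $\sum a_n$ converges iff $a_n\to0$). An interval is a set $[a,b],[a,b),(a,b]$ or $(a,b)$ with $a<b$ in $\mathcal{R}$, of length $l=b-a$. A cover of $A\subseteq\mathcal{R}$ is a sequence of intervals $(S_n)_{n\ge1}$ with $A\subseteq\bigcup_n S_n$ and $\sum_n l(S_n)$ convergent in $\mathcal{R}$. $A$ is called outer measurable if the infimum $\inf\{\sum_n l(S_n): (S_n)\text{ a cover of }A\}$ exists in $\mathcal{R}$; this infimum is then called the outer measure $M_u(A)$. An outer measurable set $A\subseteq\mathcal{R}$ is L-measurable if for every outer measurable $B\subseteq\mathcal{R}$ both $A\cap B$ and $A^c\cap B$ (where $A^c=\mathcal{R}\setminus A$) are outer measurable and $M_u(B)=M_u(A\cap B)+M_u(A^c\cap B)$; then its L-measure is $M(A):=M_u(A)$. Finite intersections of L-measurable sets are L-measurable, so $M(\bigcap_{n=1}^N A_n)$ is defined. *)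

(* The Levi-Civita field over an arbitrary
   realType R (any model of the real numbers). *)
From HB Require Import structures.
From mathcomp Require Import all_boot all_order all_algebra.
From mathcomp Require Import boolp classical_sets cardinality reals.
Set Implicit Arguments. Unset Strict Implicit. Unset Printing Implicit Defensive.
Import Order.TTheory GRing.Theory Num.Theory.
Local Open Scope classical_set_scope.
Local Open Scope ring_scope.

Section LeviCivita.
Variable R : realType.

Definition left_finite (x : rat -> R) : Prop :=
  forall q : rat, finite_set [set t : rat | t < q /\ x t != 0].

Record LC := MkLC { lc_fun :> rat -> R; lc_lf : left_finite lc_fun }.

Lemma lc0_lf : left_finite (fun _ => 0).
Proof.
move=> q; apply: (sub_finite_set _ (@finite_set0 rat)) => t /= [_].
by rewrite eqxx.
Qed.

Definition lc0 : LC := MkLC lc0_lf.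

Lemma lcadd_lf (x y : LC) : left_finite (fun t => x t + y t).
Proof.
move=> q.
have H : finite_set ([set t : rat | t < q /\ x t != 0] `|`
                      [set t : rat | t < q /\ y t != 0]).
  by rewrite finite_setU; split; apply: lc_lf.
apply: (sub_finite_set _ H).
move=> t /= [tq xy].
case: (eqVneq (x t) 0) => [x0|x0]; last by left.
by right; split => //; move: xy; rewrite x0 add0r.
Qed.

Definition lcadd (x y : LC) : LC := MkLC (lcadd_lf x y).

Lemma lcopp_lf (x : LC) : left_finite (fun t => - x t).
Proof.
move=> q; apply: (sub_finite_set _ (lc_lf x q)) => t /= [tq].
by rewrite oppr_eq0.
Qed.

Definition lcopp (x : LC) : LC := MkLC (lcopp_lf x).
Definition lcsub (x y : LC) : LC := lcadd x (lcopp y).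


(* x > 0  iff  x <> 0 and x[min supp x] > 0; written out: there is an
   exponent t with x t > 0 below which all coefficients vanish
   (t is then min supp x). *)
Definition lcpos (x : LC) : Prop :=
  exists t : rat, 0 < x t /\ forall s : rat, s < t -> x s = 0.

Definition lclt (x y : LC) : Prop := lcpos (lcsub y x).
Definition lcle (x y : LC) : Prop := x = y \/ lclt x y.

Definition lcconverges (u : nat -> LC) (l : LC) : Prop :=
  forall e : LC, lcpos e -> exists N0 : nat, forall N : nat, (N0 <= N)%N ->
    lclt (lcsub (u N) l) e /\ lclt (lcsub l (u N)) e.

Fixpoint lcpsum (u : nat -> LC) (N : nat) : LC :=
  match N with
  | O => lc0
  | S N' => lcadd (lcpsum u N') (u N')
  end.

Definition lcseries (u : nat -> LC) (s : LC) : Prop := lcconverges (lcpsum u) s.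

(* intervals [a,b], [a,b), (a,b], (a,b): closedness flags at each end;
   the condition a < b is imposed in [is_cover] *)
Record interval := MkInterval { ia : LC; ib : LC; iclosedl : bool; iclosedr : bool }.

Definition iset (I : interval) : set LC :=
  [set x | (if iclosedl I then lcle (ia I) x else lclt (ia I) x) /\
           (if iclosedr I then lcle x (ib I) else lclt x (ib I))].

Definition ilength (I : interval) : LC := lcsub (ib I) (ia I).

Definition is_cover (A : set LC) (S : nat -> interval) : Prop :=
  (forall n, lclt (ia (S n)) (ib (S n))) /\
  A `<=` \bigcup_n iset (S n) /\
  exists s, lcseries (fun n => ilength (S n)) s.

Definition cover_sums (A : set LC) : set LC :=
  [set s | exists S, is_cover A S /\ lcseries (fun n => ilength (S n)) s].

Definition lc_is_inf (E : set LC) (m : LC) : Prop :=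
  (forall s, E s -> lcle m s) /\
  (forall m', (forall s, E s -> lcle m' s) -> lcle m' m).

Definition outer_measure (A : set LC) (m : LC) : Prop := lc_is_inf (cover_sums A) m.

Definition outer_measurable (A : set LC) : Prop := exists m, outer_measure A m.

Definition L_measurable (A : set LC) : Prop :=
  outer_measurable A /\
  forall B, outer_measurable B ->
    outer_measurable (A `&` B) /\ outer_measurable (~` A `&` B) /\
    forall mB m1 m2, outer_measure B mB -> outer_measure (A `&` B) m1 ->
      outer_measure (~` A `&` B) m2 -> mB = lcadd m1 m2.

End LeviCivita.

(* Let C_N = A_0 ∩ ... ∩ A_N, a decreasing sequence of L-measurable sets with
   M(C_N) = m_N --> l, and C = ⋂_N C_N.  For a test set B of outer measure b,
   the numbers c_N = M_u(C_N ∩ B) decrease with 0 <= c_N - c_K <= m_N - m_K,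
   hence converge to some L.  Covering each layer C_{N+K} \ C_{N+K+1} (of
   measure m_{N+K} - m_{N+K+1}) up to e d^(K+1) and merging the covers along
   the diagonals of nat * nat shows that C_N \ C is covered at cost at most
   m_N - l + e.  So covers of C ∩ B and of ~C_N ∩ B extend to covers of
   C_N ∩ B and of ~C ∩ B at a cost that tends to e; letting N --> oo and then
   e --> 0 gives M_u(C ∩ B) = L and M_u(~C ∩ B) = b - L. *)

From Pilot Require Import Defs.
From HB Require Import structures.
From mathcomp Require Import all_boot all_order all_algebra.
From mathcomp Require Import boolp classical_sets cardinality reals.
From mathcomp Require Import ring lra zify.
Set Implicit Arguments. Unset Strict Implicit. Unset Printing Implicit Defensive.
Import Order.TTheory GRing.Theory Num.Theory.
Local Open Scope classical_set_scope.
Local Open Scope ring_scope.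

Lemma lc_ext (R : realType) (x y : LC R) : x =1 y -> x = y.
Proof.
case: x y => f hf [g hg] /= /funext efg; subst g.
by congr MkLC; exact: Prop_irrelevance.
Qed.

HB.instance Definition _ (R : realType) := gen_eqMixin (LC R).
HB.instance Definition _ (R : realType) := gen_choiceMixin (LC R).

Section LCZmodule.
Variable R : realType.

Lemma lcaddA : associative (@lcadd R).
Proof. by move=> x y z; apply: lc_ext => t /=; rewrite addrA. Qed.
Lemma lcaddC : commutative (@lcadd R).
Proof. by move=> x y; apply: lc_ext => t /=; rewrite addrC. Qed.
Lemma lcadd0 : left_id (@lc0 R) (@lcadd R).
Proof. by move=> x; apply: lc_ext => t /=; rewrite add0r. Qed.
Lemma lcaddN : left_inverse (@lc0 R) (@lcopp R) (@lcadd R).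
Proof. by move=> x; apply: lc_ext => t /=; rewrite addNr. Qed.

End LCZmodule.

HB.instance Definition _ (R : realType) :=
  GRing.isZmodule.Build (LC R) (@lcaddA R) (@lcaddC R) (@lcadd0 R) (@lcaddN R).

Section Coefficients.
Variable R : realType.
Implicit Types x y : LC R.

Lemma lcaddE x y : lcadd x y = x + y. Proof. by []. Qed.
Lemma lcsubE x y : lcsub x y = x - y. Proof. by []. Qed.

Lemma coef0 t : (0 : LC R) t = 0. Proof. by []. Qed.
Lemma coefD x y t : (x + y) t = x t + y t. Proof. by []. Qed.
Lemma coefN x t : (- x) t = - x t. Proof. by []. Qed.
Lemma coefB x y t : (x - y) t = x t - y t. Proof. by []. Qed.

Lemma coef_sum n (f : 'I_n -> LC R) t : (\sum_(i < n) f i) t = \sum_(i < n) f i t.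
Proof.
elim: n f => [|n IH] f; first by rewrite !big_ord0.
by rewrite !big_ord_recr coefD IH.
Qed.

End Coefficients.

Ltac lc_ring := apply: lc_ext => ?; rewrite ?(coefB, coefD, coefN, coef0); ring.

Lemma seq_has_min (s : seq rat) (t0 : rat) : t0 \in s ->
  exists2 m, m \in s & forall t, t \in s -> m <= t.
Proof.
elim: s t0 => [//|a s IH] t0 _.
have [/hasP [b bs _]|/hasPn amin] := boolP (has (fun t => t < a) s).
  have [m ms hm] := IH b bs.
  have [am|ma] := leP a m.
    exists a; first by rewrite inE eqxx.
    by move=> t; rewrite inE => /orP [/eqP ->//|/hm]; exact: le_trans.
  exists m; first by rewrite inE ms orbT.
  by move=> t; rewrite inE => /orP [/eqP ->|/hm //]; exact: ltW.
exists a => [|t]; first by rewrite inE eqxx.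
by rewrite inE => /orP [/eqP ->//|/amin]; rewrite -leNgt.
Qed.

Section LCOrder.
Variable R : realType.
Implicit Types x y z : LC R.

Definition lcnneg x := x = 0 \/ lcpos x.

Lemma lcleE x y : lcle x y <-> lcnneg (y - x).
Proof.
rewrite /lcle /lclt /lcnneg; split; first by case=> [->|]; [left; exact: subrr|right].
by case=> [/eqP|]; [rewrite subr_eq0 => /eqP ->; left|right].
Qed.

Lemma lcle0E x : lcle 0 x <-> lcnneg x.
Proof. by rewrite lcleE subr0. Qed.

Lemma lc_lead x : x <> 0 -> exists t, x t != 0 /\ forall s, s < t -> x s = 0.
Proof.
move=> x0; have [t0 xt0] : exists t0, x t0 != 0.
  apply: contrapT => H; apply: x0; apply: lc_ext => t; rewrite coef0.
  by apply/eqP; apply: contrapT => /negP h; apply: H; exists t.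
set low := [set t : rat | t < t0 + 1 /\ x t != 0].
have [s lowE] := iffLR (finite_seqP low) (lc_lf x (t0 + 1)).
have t0s : t0 \in s.
  have : low t0 by split; rewrite ?ltrDl.
  by rewrite lowE.
have [m ms mmin] := seq_has_min t0s.
have : low m by rewrite lowE.
case=> mlt xm; exists m; split => // u um; apply/eqP; apply: contrapT => /negP xu.
have : low u by split => //; exact: lt_trans um mlt.
by rewrite lowE => /mmin; rewrite leNgt um.
Qed.

Lemma lc_trichotomy x : x = 0 \/ lcpos x \/ lcpos (- x).
Proof.
have [->|/lc_lead [t [xt low]]] := pselect (x = 0); first by left.
right; case: (ltgtP (x t) 0) => [xneg|xpos|x0]; last by rewrite x0 eqxx in xt.
- right; exists t; split => [|s /low]; first by rewrite coefN oppr_gt0.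
  by rewrite coefN => ->; rewrite oppr0.
- by left; exists t.
Qed.

Lemma lcnneg_lead_ge0 x t : lcnneg x -> (forall s, s < t -> x s = 0) -> 0 <= x t.
Proof.
case=> [-> //|[u [xu lowu]]] lowt.
case: (ltgtP t u) => [/lowu -> //|/lowt xu0|->]; last exact: ltW.
by rewrite xu0 ltxx in xu.
Qed.

Lemma lcposD x y : lcpos x -> lcpos y -> lcpos (x + y).
Proof.
move=> [t [xt lowx]] [u [yu lowy]].
case: (ltgtP t u) => [tu|ut|etu]; last subst u.
- exists t; split; first by rewrite coefD (lowy t tu) addr0.
  by move=> s st; rewrite coefD lowx // lowy ?addr0 //; exact: lt_trans st tu.
- exists u; split; first by rewrite coefD (lowx u ut) add0r.
  by move=> s su; rewrite coefD lowy // lowx ?addr0 //; exact: lt_trans su ut.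
- exists t; split; first by rewrite coefD addr_gt0.
  by move=> s st; rewrite coefD lowx // lowy // addr0.
Qed.

Lemma lcposN x : lcpos x -> ~ lcpos (- x).
Proof.
move=> [t [xt low]] pNx; suff : 0 <= (- x) t by rewrite coefN oppr_ge0 leNgt xt.
apply: lcnneg_lead_ge0; first by right.
by move=> s /low; rewrite coefN => ->; rewrite oppr0.
Qed.

Lemma lcpos_neq0 x : lcpos x -> x <> 0.
Proof. by move=> [t [xt _]] x0; rewrite x0 coef0 ltxx in xt. Qed.

Lemma lcnnegD x y : lcnneg x -> lcnneg y -> lcnneg (x + y).
Proof.
case=> [->|px]; first by rewrite add0r.
by case=> [->|py]; [rewrite addr0; right|right; exact: lcposD].
Qed.

Lemma lcle_refl x : lcle x x. Proof. by left. Qed.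

Lemma lcle_trans y x z : lcle x y -> lcle y z -> lcle x z.
Proof. by rewrite !lcleE => xy /lcnnegD /(_ xy); rewrite addrA subrK. Qed.

Lemma lcle_anti x y : lcle x y -> lcle y x -> x = y.
Proof.
rewrite !lcleE => [[/eqP|pyx]]; first by rewrite subr_eq0 => /eqP.
case=> [/eqP|pxy]; first by rewrite subr_eq0 => /eqP.
by case: (lcposN pyx); rewrite opprB.
Qed.

Lemma lcltW x y : lclt x y -> lcle x y. Proof. by right. Qed.

Lemma lcltNle x y : lclt x y -> ~ lcle y x.
Proof.
rewrite lcleE => pyx [/eqP|pxy].
  by rewrite -oppr_eq0 opprB => /eqP; exact: lcpos_neq0.
by apply: (lcposN pyx); rewrite opprB.
Qed.

Lemma lcNle_lt x y : ~ lcle x y -> lclt y x.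
Proof.
rewrite lcleE => nxy; case: (lc_trichotomy (y - x)) => [yx|[pyx|]].
- by case: nxy; left.
- by case: nxy; right.
- by rewrite opprB.
Qed.

Lemma lcleD x y x' y' : lcle x y -> lcle x' y' -> lcle (x + x') (y + y').
Proof. by rewrite !lcleE => /lcnnegD h /h; rewrite opprD addrACA. Qed.

Lemma lcle_add2r x y z : lcle x y -> lcle (x + z) (y + z).
Proof. by move/lcleD; apply; exact: lcle_refl. Qed.

Lemma lcle_subl_addr x y z : lcle (x - y) z <-> lcle x (z + y).
Proof. by rewrite !lcleE opprB addrA. Qed.

Lemma lcle_sub2l x y z : lcle y x -> lcle (z - x) (z - y).
Proof. by rewrite !lcleE (_ : z - y - (z - x) = x - y) //; lc_ring. Qed.

End LCOrder.

Section Convergence.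
Variable R : realType.
Implicit Types x y d e a b c l : LC R.
Implicit Types u v : nat -> LC R.

(* The sets [vanishes_below q] form a basis of neighbourhoods of 0 in the
   order topology, see [lcconvergesP]. *)
Definition vanishes_below (q : rat) x := forall t, t < q -> x t = 0.

Lemma vanishes_below0 q : vanishes_below q 0. Proof. by []. Qed.

Lemma vanishes_belowD q x y :
  vanishes_below q x -> vanishes_below q y -> vanishes_below q (x + y).
Proof. by move=> hx hy t tq; rewrite coefD hx // hy // addr0. Qed.

Lemma vanishes_belowN q x : vanishes_below q x -> vanishes_below q (- x).
Proof. by move=> hx t tq; rewrite coefN hx // oppr0. Qed.

Lemma vanishes_belowB q x y :
  vanishes_below q x -> vanishes_below q y -> vanishes_below q (x - y).
Proof. by move=> hx /vanishes_belowN; exact: vanishes_belowD. Qed.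

Lemma vanishes_belowMn q x k : vanishes_below q x -> vanishes_below q (x *+ k).
Proof.
move=> xq; elim: k => [|k IH]; first exact: vanishes_below0.
by rewrite mulrS; exact: vanishes_belowD.
Qed.

Lemma lcnnegD_lead_ge0 x d t q : t < q -> vanishes_below q d -> lcnneg (x + d) ->
  (forall s, s < t -> x s = 0) -> 0 <= x t.
Proof.
move=> tq dq /lcnneg_lead_ge0 h low; have /h : forall s, s < t -> (x + d) s = 0.
  by move=> s st; rewrite coefD low // dq ?addr0 //; exact: lt_trans st tq.
by rewrite coefD dq // addr0.
Qed.

Lemma vanishes_below_le q a b : lcnneg a -> lcle a b -> vanishes_below q b ->
  vanishes_below q a.
Proof.
case=> [-> //|[t [at0 low]]] /lcleE; rewrite -[b - a]addrC => nab bq s sq.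
have [qt|tq] := leP q t; first by apply: low; exact: lt_le_trans qt.
suff : 0 <= (- a) t by rewrite coefN oppr_ge0 leNgt at0.
by apply: (lcnnegD_lead_ge0 tq bq nab) => s' /low; rewrite coefN => ->; rewrite oppr0.
Qed.

Lemma dpow_lf (q : rat) : left_finite (fun t : rat => if t == q then (1 : R) else 0).
Proof.
move=> r; apply: (sub_finite_set _ (finite_set1 q)) => t /= [_].
by case: (boolP (t == q)) => [/eqP|_] //; rewrite eqxx.
Qed.

(* the monomial d^q, where d is the positive infinitesimal with d[1] = 1 *)
Definition dpow q : LC R := MkLC (dpow_lf q).

Lemma dpow_pos q : lcpos (dpow q).
Proof.
exists q; split; first by rewrite /= eqxx ltr01.
by move=> s sq /=; rewrite (lt_eqF sq).
Qed.

Lemma dpow_vanishes_below q : vanishes_below q (dpow q).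
Proof. by move=> t tq /=; rewrite (lt_eqF tq). Qed.

Lemma lcpos_vanishes_below e : lcpos e ->
  exists q, forall y, vanishes_below q y -> lclt y e.
Proof.
move=> [t [et low]]; exists (t + 1) => y yq; have tq : t < t + 1 by rewrite ltrDl.
exists t; split; first by rewrite coefB yq // subr0.
by move=> s st; rewrite coefB low // yq ?subr0 //; exact: lt_trans st tq.
Qed.

Lemma vanishes_below_dpow q y : lclt y (dpow q) -> lclt (- y) (dpow q) ->
  vanishes_below q y.
Proof.
have dq := @dpow_vanishes_below q.
move=> /lcltW /lcleE ny /lcltW /lcleE py t tq.
apply: contrapT => yt; have /lc_lead [t1 [yt1 low]] : y <> 0.
  by move=> y0; rewrite y0 in yt.
have t1q : t1 < q by case: (leP t1 t) => [/le_lt_trans->//|/low].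
have lowN s : s < t1 -> (- y) s = 0 by move=> /low; rewrite coefN => ->; rewrite oppr0.
rewrite addrC in ny; rewrite opprK addrC in py.
have := lcnnegD_lead_ge0 t1q dq ny lowN; have := lcnnegD_lead_ge0 t1q dq py low.
by rewrite coefN oppr_ge0 => y0 y1; case/negP: yt1; rewrite eq_le y1.
Qed.

Lemma lcconvergesP u l : lcconverges u l <->
  forall q, exists N, forall n, (N <= n)%N -> vanishes_below q (u n - l).
Proof.
split=> [cvg q|cvg e /lcpos_vanishes_below [q small]].
  have [N hN] := cvg _ (@dpow_pos q); exists N => n /hN [h1 h2].
  by apply: vanishes_below_dpow => //; rewrite opprB.
have [N hN] := cvg q; exists N => n /hN nq; split; first exact: small.
by apply: small; rewrite lcsubE -opprB; exact: vanishes_belowN.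
Qed.

Lemma lcconverges_cst c : lcconverges (fun _ => c) c.
Proof. by apply/lcconvergesP => q; exists 0%N => n _; rewrite subrr. Qed.

Lemma lcconvergesD u v a b : lcconverges u a -> lcconverges v b ->
  lcconverges (fun n => u n + v n) (a + b).
Proof.
move=> /lcconvergesP ua /lcconvergesP vb; apply/lcconvergesP => q.
have [N1 h1] := ua q; have [N2 h2] := vb q; exists (maxn N1 N2) => n.
rewrite geq_max => /andP [n1 n2].
by rewrite opprD addrACA; apply: vanishes_belowD; [exact: h1|exact: h2].
Qed.

Lemma lcconvergesN u a : lcconverges u a -> lcconverges (fun n => - u n) (- a).
Proof.
move=> /lcconvergesP ua; apply/lcconvergesP => q; have [N h] := ua q.
by exists N => n Nn; rewrite -opprD; apply: vanishes_belowN; exact: h.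
Qed.

Lemma lcle_of_vanishes_below a b :
  (forall q, exists d, vanishes_below q d /\ lcle a (b + d)) -> lcle a b.
Proof.
move=> near_ab; apply: contrapT => /lcNle_lt [t [abt low]].
have tq : t < t + 1 by rewrite ltrDl.
have [d [dq /lcleE abd]] := near_ab (t + 1).
suff : 0 <= (b - a) t by rewrite coefB subr_ge0 leNgt -subr_gt0 -coefB abt.
apply: (lcnnegD_lead_ge0 tq dq); first by rewrite addrAC.
by move=> s /low; rewrite !coefB => /eqP; rewrite subr_eq0 => /eqP ->; rewrite subrr.
Qed.

Lemma lcle_addpos k a b : (forall e, lcpos e -> lcle a (b + e *+ k)) -> lcle a b.
Proof.
move=> ab; apply: lcle_of_vanishes_below => q; exists (dpow q *+ k).
by split; [exact/vanishes_belowMn/dpow_vanishes_below|exact/ab/dpow_pos].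
Qed.

Lemma lcconverges_le u v a b :
  (exists N, forall n, (N <= n)%N -> lcle (u n) (v n)) ->
  lcconverges u a -> lcconverges v b -> lcle a b.
Proof.
move=> [N uv] /lcconvergesP ua /lcconvergesP vb; apply: lcle_of_vanishes_below => q.
have [N1 h1] := ua q; have [N2 h2] := vb q; set n := maxn N (maxn N1 N2).
exists ((v n - b) - (u n - a)); split.
  by apply: vanishes_belowB; [apply: h2|apply: h1]; rewrite /n; lia.
have -> : b + ((v n - b) - (u n - a)) = a + (v n - u n) by lc_ring.
rewrite -[a in lcle a _]addr0; apply: lcleD; first exact: lcle_refl.
by apply/lcle0E/lcleE; apply: uv; rewrite /n; lia.
Qed.

Definition lccauchy u :=
  forall q, exists N, forall n, (N <= n)%N -> vanishes_below q (u n - u N).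

Lemma lccauchy_converges u : lccauchy u -> exists l, lcconverges u l.
Proof.
move=> /choice [N hN].
pose f t := u (N (t + 1)) t.
have fE q t : t < q -> f t = u (N q) t.
  move=> tq; rewrite /f; set M := maxn (N (t + 1)) (N q).
  have tt1 : t < t + 1 by rewrite ltrDl.
  have /eqP := hN (t + 1) M (leq_maxl _ _) t tt1; rewrite coefB subr_eq0 => /eqP <-.
  by have /eqP := hN q M (leq_maxr _ _) t tq; rewrite coefB subr_eq0 => /eqP.
have lf : left_finite f.
  move=> q; apply: (sub_finite_set _ (lc_lf (u (N q)) q)) => t /= [tq ft].
  by split => //; rewrite -(fE q).
exists (MkLC lf); apply/lcconvergesP => q; exists (N q) => n Nn t tq.
by rewrite coefB /= (fE q) // -coefB (hN q n Nn t tq).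
Qed.

End Convergence.

Section Series.
Variable R : realType.
Implicit Types x y a b c s : LC R.
Implicit Types u v : nat -> LC R.

Lemma lcle_sum n (f g : 'I_n -> LC R) : (forall i, lcle (f i) (g i)) ->
  lcle (\sum_(i < n) f i) (\sum_(i < n) g i).
Proof.
elim: n f g => [|n IH] f g fg; first by rewrite !big_ord0; exact: lcle_refl.
by rewrite !big_ord_recr; apply: lcleD => //; exact: IH.
Qed.

Lemma lcpsumS u n : lcpsum u n.+1 = lcpsum u n + u n. Proof. by []. Qed.

Lemma lcpsum_mono u m n : (forall k, lcnneg (u k)) -> (m <= n)%N ->
  lcle (lcpsum u m) (lcpsum u n).
Proof.
move=> u_ge0; elim: n => [|n IH]; first by rewrite leqn0 => /eqP ->; exact: lcle_refl.
rewrite leq_eqVlt => /orP [/eqP ->|]; first exact: lcle_refl.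
rewrite ltnS => /IH mn; apply: lcle_trans mn _.
by apply/lcleE; rewrite lcpsumS addrC addKr.
Qed.

Lemma lcpsum_le_series u s : (forall k, lcnneg (u k)) -> lcseries u s ->
  forall n, lcle (lcpsum u n) s.
Proof.
move=> u_ge0 us n; apply: (@lcconverges_le _ (fun=> lcpsum u n) (lcpsum u)) => //.
- by exists n => k nk; exact: lcpsum_mono.
- exact: lcconverges_cst.
Qed.

Lemma lcseries_le u s b : lcseries u s -> (forall n, lcle (lcpsum u n) b) -> lcle s b.
Proof.
move=> us ub; apply: (@lcconverges_le _ (lcpsum u) (fun=> b)) => //.
- by exists 0%N.
- exact: lcconverges_cst.
Qed.

Lemma lcseries_vanishes u s : lcseries u s ->
  forall q, exists N, forall n, (N <= n)%N -> vanishes_below q (u n).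
Proof.
move=> /lcconvergesP us q; have [N hN] := us q; exists N => n Nn.
have := vanishes_belowB (hN n.+1 (leqW Nn)) (hN n Nn).
by rewrite lcpsumS opprB addrA subrK addrC addKr.
Qed.

Lemma lcseries_of_vanishes u :
  (forall q, exists N, forall n, (N <= n)%N -> vanishes_below q (u n)) ->
  exists s, lcseries u s.
Proof.
move=> u0; apply: lccauchy_converges => q; have [N hN] := u0 q; exists N.
elim => [|n IH]; first by rewrite leqn0 => /eqP ->; rewrite subrr.
rewrite leq_eqVlt => /orP [/eqP <-|]; first by rewrite subrr.
rewrite ltnS => Nn; rewrite lcpsumS addrAC.
by apply: vanishes_belowD; [exact: IH|exact: hN].
Qed.

End Series.

Section OuterMeasure.
Variable R : realType.
Implicit Types a b e m s : LC R.
Implicit Types X Y : set (LC R).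
Implicit Types S T : nat -> Defs.interval R.

Definition lengths S n := ilength (S n).

Lemma is_cover_sub X Y S : X `<=` Y -> is_cover Y S -> is_cover X S.
Proof.
by move=> XY [lt [YS sum]]; split; [|split; first exact: subset_trans XY YS].
Qed.

Lemma cover_sums_sub X Y s : X `<=` Y -> cover_sums Y s -> cover_sums X s.
Proof. by move=> XY [S [YS Ss]]; exists S; split => //; exact: is_cover_sub YS. Qed.

Lemma lengths_nneg X S n : is_cover X S -> lcnneg (lengths S n).
Proof. by move=> [lt _]; right; exact: lt. Qed.

Lemma cover_sums_nneg X s : cover_sums X s -> lcnneg s.
Proof.
move=> [S [XS Ss]]; apply/lcle0E.
exact: lcpsum_le_series (fun k => lengths_nneg k XS) Ss 0.
Qed.

Lemma outer_measure_le X a s : outer_measure X a -> cover_sums X s -> lcle a s.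
Proof. by move=> [lb _]; exact: lb. Qed.

Lemma outer_measure_ge X a m :
  outer_measure X a -> (forall s, cover_sums X s -> lcle m s) -> lcle m a.
Proof. by move=> [_ glb]; exact: glb. Qed.

Lemma outer_measure_mono X Y a b : X `<=` Y ->
  outer_measure X a -> outer_measure Y b -> lcle a b.
Proof.
move=> XY Xa Yb; apply: (outer_measure_ge Yb) => s /(cover_sums_sub XY).
exact: outer_measure_le.
Qed.

Lemma outer_measure_unique X a b : outer_measure X a -> outer_measure X b -> a = b.
Proof.
by move=> Xa Xb; apply: lcle_anti; apply: (outer_measure_mono (@subset_refl _ X)).
Qed.

Lemma outer_measure_nneg X a : outer_measure X a -> lcnneg a.
Proof.
move=> Xa; apply/lcle0E; apply: (outer_measure_ge Xa) => s.
by move=> /cover_sums_nneg /lcle0E.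
Qed.

Lemma outer_measure_approx X a e : outer_measure X a -> lcpos e ->
  exists S s, is_cover X S /\ lcseries (lengths S) s /\ lcle s (a + e).
Proof.
move=> Xa ep; apply: contrapT => noS.
suff : lcle (a + e) a by apply: lcltNle; rewrite /lclt lcsubE addrC addKr.
apply: (outer_measure_ge Xa) => s [S [XS Ss]]; apply/lcltW/lcNle_lt => sa.
by apply: noS; exists S, s.
Qed.

Definition interleave S T n := if odd n then T n./2 else S n./2.

Lemma lcpsum_interleave S T k :
  lcpsum (lengths (interleave S T)) k.*2 =
    lcpsum (lengths S) k + lcpsum (lengths T) k /\
  lcpsum (lengths (interleave S T)) k.*2.+1 =
    lcpsum (lengths S) k.+1 + lcpsum (lengths T) k.
Proof.
elim: k => [|k [IH1 IH2]]; first by split; rewrite /= ?add0r ?addr0.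
have sum_even : lcpsum (lengths (interleave S T)) k.+1.*2 =
    lcpsum (lengths S) k.+1 + lcpsum (lengths T) k.+1.
  rewrite doubleS lcpsumS IH2 lcpsumS [in RHS]lcpsumS -addrA; congr (_ + _).
  by rewrite /lengths /interleave /= odd_double /= uphalf_double.
split => //; rewrite lcpsumS sum_even [in RHS]lcpsumS addrAC; congr (_ + _).
by rewrite /lengths /interleave /= odd_double /= doubleK.
Qed.

Lemma cover_sumsU X Y s s' : cover_sums X s -> cover_sums Y s' ->
  cover_sums (X `|` Y) (s + s').
Proof.
move=> [S [[Slt [XS _]] Ss]] [T [[Tlt [YT _]] Ts]].
have cvg : lcseries (lengths (interleave S T)) (s + s').
  move: Ss Ts => /lcconvergesP Ss /lcconvergesP Ts; apply/lcconvergesP => q.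
  have [N1 hN1] := Ss q; have [N2 hN2] := Ts q.
  exists (maxn N1 N2).+1.*2 => n hn.
  have /ltnW hk : (maxn N1 N2 < n./2)%N by move: (half_leq hn); rewrite doubleK.
  rewrite -(odd_double_half n); have [sum_even sum_odd] := lcpsum_interleave S T n./2.
  case: (odd n); rewrite ?add0n ?add1n ?sum_even ?sum_odd opprD addrACA;
    by apply: vanishes_belowD; [apply: hN1|apply: hN2]; lia.
exists (interleave S T); split => //; split.
  by move=> n; rewrite /interleave; case: (odd n).
split; last by exists (s + s').
move=> x [/XS [n _ xn]|/YT [n _ xn]].
- by exists n.*2 => //; rewrite /interleave odd_double doubleK.
- by exists n.*2.+1 => //; rewrite /interleave /= odd_double /= uphalf_double.
Qed.

End OuterMeasure.

(* [diag] enumerates [nat * nat] along the antidiagonals [K + n = D]; the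
   [D]-th antidiagonal starts at index [triangle D]. *)
Fixpoint triangle D := if D is D'.+1 then (triangle D' + D'.+1)%N else 0%N.

Definition diag_next (p : nat * nat) :=
  if p.2 is n.+1 then (p.1.+1, n) else (0%N, p.1.+1).

Fixpoint diag i := if i is i'.+1 then diag_next (diag i') else (0%N, 0%N).

Lemma diag_antidiagonal D : diag (triangle D) = (0%N, D) ->
  forall j, (j <= D)%N -> diag (triangle D + j) = (j, D - j)%N.
Proof.
move=> start; elim => [|j IH] jD; first by rewrite addn0 subn0.
rewrite addnS /= IH; last exact: ltnW.
by rewrite /diag_next /=; case E: (D - j)%N => [|m]; [lia|congr pair; lia].
Qed.

Lemma diagE D j : (j <= D)%N -> diag (triangle D + j) = (j, D - j)%N.
Proof.
apply: diag_antidiagonal; elim: D => [//|D IH] /=.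
by rewrite addnS /= (diag_antidiagonal IH (leqnn D)) subnn.
Qed.

Lemma diag_surj K n : diag (triangle (K + n) + K) = (K, n).
Proof. by rewrite diagE ?leq_addr // addKn. Qed.

Lemma triangle_decomp i : exists D j, (j <= D)%N /\ i = (triangle D + j)%N.
Proof.
elim: i => [|i [D [j [jD ->]]]]; first by exists 0%N, 0%N.
have [jltD|] := ltnP j D; first by exists D, j.+1; rewrite addnS.
by exists D.+1, 0%N; split => //=; lia.
Qed.

Lemma triangle_mono : {homo triangle : D D' / (D <= D')%N}.
Proof.
move=> D; elim => [|D' IH]; first by rewrite leqn0 => /eqP ->.
by rewrite leq_eqVlt => /orP [/eqP ->//|]; rewrite ltnS => /IH /=; lia.
Qed.

Lemma triangle_ge D : (D <= triangle D)%N.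
Proof. by elim: D => //= D IH; lia. Qed.

Section Shift.
Variable R : realType.
Implicit Types e x : LC R.

Lemma lcshift_lf (k : nat) x : left_finite (fun t : rat => x (t - k%:R)).
Proof.
move=> q; have := finite_image (fun t => t + k%:R) (lc_lf x (q - k%:R)).
apply: sub_finite_set => t /= [tq xt]; exists (t - k%:R); last by rewrite subrK.
by split => //; rewrite ltrBlDr subrK.
Qed.

(* x * d^k *)
Definition lcshift (k : nat) x : LC R := MkLC (lcshift_lf k x).

Lemma lcshift_pos k e : lcpos e -> lcpos (lcshift k e).
Proof.
move=> [t [et low]]; exists (t + k%:R); split; first by rewrite /= addrK.
by move=> s st /=; apply: low; rewrite ltrBlDr.
Qed.

Lemma sum_lcshift_le e D : lcpos e -> lcle (\sum_(i < D) lcshift i.+1 e) e.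
Proof.
move=> [t [et low]]; right.
have sum0 s : s <= t -> (\sum_(i < D) lcshift i.+1 e) s = 0.
  move=> st; rewrite coef_sum big1 // => i _ /=; apply: low.
  by rewrite ltrBlDr (le_lt_trans st) // ltrDl ltr0n.
exists t; split; first by rewrite lcsubE coefB sum0 // subr0.
by move=> s st; rewrite lcsubE coefB sum0 ?low ?subr0 //; exact: ltW.
Qed.

Lemma lcshift_vanishes e : lcpos e ->
  forall q, exists K, forall k, (K <= k)%N -> vanishes_below q (lcshift k e).
Proof.
move=> [t [et low]] q; exists (Num.truncn (q - t)).+1 => k Kk s sq /=; apply: low.
have := Num.Theory.truncnS_gt (q - t).
have : ((Num.truncn (q - t)).+1%:R <= k%:R :> rat) by rewrite ler_nat.
lra.
Qed.

End Shift.

Section CountableUnion.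
Variable R : realType.
Variable X : nat -> set (LC R).
Variable F : nat -> nat -> Defs.interval R.
Variables (beta : nat -> LC R) (bound : LC R).
Hypothesis XF : forall K, is_cover (X K) (F K).
Hypothesis F_le_beta : forall K n, lcle (lcpsum (lengths (F K)) n) (beta K).
Hypothesis beta_vanishes :
  forall q, exists K0, forall K, (K0 <= K)%N -> vanishes_below q (beta K).
Hypothesis sum_beta_le : forall D, lcle (\sum_(K < D) beta K) bound.

Let diag_cover i := F (diag i).1 (diag i).2.

Let lengths_diag_cover i :
  lengths diag_cover i = lengths (F (diag i).1) (diag i).2.
Proof. by []. Qed.

Let diag_cover_nneg i : lcnneg (lengths diag_cover i).
Proof. exact: lengths_nneg (XF _). Qed.

Lemma lcpsum_diag_triangle D : lcpsum (lengths diag_cover) (triangle D) =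
  \sum_(K < D) lcpsum (lengths (F K)) (D - K)%N.
Proof.
elim: D => [|D IH]; first by rewrite big_ord0.
have row j : (j <= D.+1)%N -> lcpsum (lengths diag_cover) (triangle D + j) =
    lcpsum (lengths diag_cover) (triangle D) +
    \sum_(K < j) lengths (F K) (D - K)%N.
  elim: j => [|j IHj] jD; first by rewrite addn0 big_ord0 addr0.
  rewrite addnS lcpsumS IHj ?(ltnW jD) // lengths_diag_cover diagE.
    by rewrite big_ord_recr [RHS]addrA.
  by rewrite -ltnS.
rewrite /= row // IH big_ord_recr [in RHS]big_ord_recr subnn subSnn /=.
rewrite addrA -big_split /=; congr (_ + _); last exact: esym (add0r _).
by apply: eq_bigr => K _; rewrite subSn ?lcpsumS //; exact: ltnW (ltn_ord K).
Qed.

Lemma lcpsum_diag_le i : lcle (lcpsum (lengths diag_cover) i) bound.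
Proof.
apply: lcle_trans (lcpsum_mono diag_cover_nneg (triangle_ge i)) _.
rewrite lcpsum_diag_triangle; apply: lcle_trans (sum_beta_le i).
by apply: lcle_sum => K; exact: F_le_beta.
Qed.

Lemma lengths_diag_vanish q :
  exists N, forall n, (N <= n)%N -> vanishes_below q (lengths diag_cover n).
Proof.
have [K0 K0beta] := beta_vanishes q.
have [M FM] : exists M, forall K, (K < K0)%N -> forall n, (M <= n)%N ->
    vanishes_below q (lengths (F K) n).
  elim: K0 {K0beta} => [|K0 [M1 FM1]]; first by exists 0%N.
  have [_ [_ [s Fs]]] := XF K0; have [M2 FM2] := lcseries_vanishes Fs q.
  exists (maxn M1 M2) => K; rewrite ltnS leq_eqVlt => /orP [/eqP ->|KK0] n.
    by rewrite geq_max => /andP [_]; exact: FM2.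
  by rewrite geq_max => /andP [M1n _]; exact: FM1.
exists (triangle (K0 + M)) => i; have [D [j [jD ->]]] := triangle_decomp i => Di.
have DK : (K0 + M <= D)%N.
  by rewrite leqNgt; apply/negP => /triangle_mono /=; lia.
rewrite lengths_diag_cover diagE //=.
have [K0j|jK0] := leqP K0 j; last by apply: FM; lia.
apply: vanishes_below_le (lengths_nneg _ (XF j)) _ (K0beta j K0j).
apply: lcle_trans (F_le_beta j (D - j).+1).
apply/lcleE; rewrite lcpsumS addrK; apply/lcle0E.
exact: lcpsum_mono (fun k => lengths_nneg k (XF j)) (leq0n _).
Qed.

Lemma cover_sums_bigcup : exists s, cover_sums (\bigcup_K X K) s /\ lcle s bound.
Proof.
have [s Ts] := lcseries_of_vanishes lengths_diag_vanish.
exists s; split; last exact: lcseries_le Ts lcpsum_diag_le.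
exists diag_cover; split => //; split.
  by move=> i; case: (XF (diag i).1) => lt _; exact: lt.
split; last by exists s.
move=> x [K _ /(proj1 (proj2 (XF K))) [n _ xn]].
by exists (triangle (K + n) + K)%N => //; rewrite /diag_cover diag_surj.
Qed.

End CountableUnion.

Section LMeasurable.
Variable R : realType.
Implicit Types a b e m p s u : LC R.
Implicit Types X Y B : set (LC R).

Lemma L_measurable_compl X B b p : L_measurable X -> outer_measure B b ->
  outer_measure (X `&` B) p -> outer_measure (~` X `&` B) (b - p).
Proof.
move=> [_ splitX] Bb XBp; have [_ [[r nXBr] add]] := splitX B (ex_intro _ b Bb).
by rewrite (add _ _ _ Bb XBp nXBr) addrC addKr.
Qed.

Lemma L_measurable_split X B b : L_measurable X -> outer_measure B b ->
  exists p, outer_measure (X `&` B) p /\ outer_measure (~` X `&` B) (b - p).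
Proof.
move=> measX Bb; have [[p XBp] _] := measX.2 B (ex_intro _ b Bb).
by exists p; split => //; exact: L_measurable_compl.
Qed.

Lemma L_measurable_of_split X :
  (forall B b, outer_measure B b -> exists p,
    outer_measure (X `&` B) p /\ outer_measure (~` X `&` B) (b - p)) ->
  outer_measurable X -> L_measurable X.
Proof.
move=> splitX measX; split => // B [b Bb]; have [p [XBp nXBp]] := splitX B b Bb.
split; first by exists p.
split; first by exists (b - p).
move=> b' p' r' Bb' XBp' nXBr'; rewrite (outer_measure_unique Bb' Bb).
rewrite (outer_measure_unique XBp' XBp) (outer_measure_unique nXBr' nXBp).
by rewrite lcaddE subrKC.
Qed.

Lemma L_measurableI X Y : L_measurable X -> L_measurable Y -> L_measurable (X `&` Y).
Proof.
move=> measX measY; apply: L_measurable_of_split; last first.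
  have [[a Xa] _] := measX; have [u [YXu _]] := L_measurable_split measY Xa.
  by exists u; rewrite setIC.
move=> B b Bb; have [p [XBp nXBp]] := L_measurable_split measX Bb.
have [u [YXBu nYXBu]] := L_measurable_split measY XBp.
have XYB : X `&` Y `&` B = Y `&` (X `&` B) by rewrite setIAC setIC.
exists u; rewrite XYB; split => //; split.
  move=> s cover_s; apply: (@lcle_addpos _ 1) => e /(outer_measure_approx YXBu).
  move=> [S [s1 [YXBS [Ss1 s1u]]]]; rewrite mulr1n.
  have cover_b : cover_sums B (s + s1).
    apply: cover_sums_sub (cover_sumsU cover_s (ex_intro _ S (conj YXBS Ss1))).
    by move=> x Bx; have [[Xx Yx]|nXY] := pselect (X x /\ Y x); [right|left].
  apply/lcle_subl_addr; rewrite -addrA (addrC e).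
  exact: lcle_trans (outer_measure_le Bb cover_b) (lcleD (lcle_refl s) s1u).
move=> m lb; apply: (@lcle_addpos _ 2) => e ep; rewrite mulr2n addrA.
have [S1 [s1 [cover1 [Ss1 s1le]]]] := outer_measure_approx nYXBu ep.
have [S2 [s2 [cover2 [Ss2 s2le]]]] := outer_measure_approx nXBp ep.
have cover : cover_sums (~` (X `&` Y) `&` B) (s1 + s2).
  apply: cover_sums_sub (cover_sumsU (ex_intro _ S1 (conj cover1 Ss1))
                                      (ex_intro _ S2 (conj cover2 Ss2))).
  move=> x [nXYx Bx]; have [Xx|nXx] := pselect (X x); last by right.
  by left; split => // Yx; apply: nXYx.
apply: lcle_trans (lb _ cover) _.
have -> : b - u + e + e = (p - u + e) + (b - p + e) by lc_ring.
exact: lcleD.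
Qed.

End LMeasurable.

Section DecreasingIntersection.
Variable R : realType.
Implicit Types a e s : LC R.
Variables (A : nat -> set (LC R)) (m : nat -> LC R) (l : LC R).
Hypothesis measA : forall n, L_measurable (A n).
Hypothesis Cm : forall N, outer_measure (\bigcap_(n in `I_N.+1) A n) (m N).
Hypothesis m_cvg : lcconverges m l.

Let C N := \bigcap_(n in `I_N.+1) A n.
Let Cinf := \bigcap_n A n.

Lemma C_measurable N : L_measurable (C N).
Proof.
elim: N => [|N IH].
  suff -> : C 0 = A 0 by exact: measA.
  by apply/seteqP; split=> [x /(_ 0%N isT)|x A0x [|]].
suff -> : C N.+1 = C N `&` A N.+1 by exact: L_measurableI.
apply/seteqP; split => [x CSx|x [CNx ASx] n /=].
  by split=> [n /= nN|]; apply: CSx => /=; lia.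
by rewrite ltnS leq_eqVlt => /orP [/eqP -> //|]; exact: CNx.
Qed.

Lemma C_decr N K : (N <= K)%N -> C K `<=` C N.
Proof. by move=> NK x CKx n /= nN; apply: CKx => /=; lia. Qed.

Lemma setI_C_decr N K : (N <= K)%N -> C K `&` C N = C K.
Proof. by move=> NK; apply/setIidPl; exact: C_decr. Qed.

Lemma Cinf_sub N : Cinf `<=` C N.
Proof. by move=> x Cx n _; exact: Cx. Qed.

Lemma C_exit N x : C N x -> ~ Cinf x -> exists K, C (N + K) x /\ ~ C (N + K.+1) x.
Proof.
move=> CNx nCx; apply: contrapT => stay; apply: nCx => n _.
have CNKx K : C (N + K) x.
  elim: K => [|K IH]; first by rewrite addn0.
  by apply: contrapT => nCx; apply: stay; exists K.
by apply: (CNKx n) => /=; lia.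
Qed.

Lemma l_le_m N : lcle l (m N).
Proof.
apply: (@lcconverges_le _ m (fun=> m N)) => //; last exact: lcconverges_cst.
by exists N => K NK; exact: outer_measure_mono (C_decr NK) (Cm K) (Cm N).
Qed.

Lemma outer_measure_C_diff N K : (N <= K)%N ->
  outer_measure (~` C K `&` C N) (m N - m K).
Proof.
move=> NK; apply: L_measurable_compl (C_measurable K) (Cm N) _.
by rewrite setI_C_decr //; exact: Cm.
Qed.

Lemma m_diff_vanishes q : exists N0, forall N K, (N0 <= N)%N -> (N0 <= K)%N ->
  vanishes_below q (m N - m K).
Proof.
have [N0 hN0] := iffLR (lcconvergesP m l) m_cvg q; exists N0 => N K N0N N0K.
have -> : m N - m K = (m N - l) - (m K - l) by rewrite opprB addrA subrK.
by apply: vanishes_belowB; exact: hN0.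
Qed.

Lemma sum_m_gaps N D : \sum_(K < D) (m (N + K) - m (N + K.+1)) = m N - m (N + D).
Proof.
have := telescope_sumr (fun K => m (N + K)) (leq0n D).
rewrite addn0 big_mkord => telescope; rewrite -opprB -telescope -sumrN.
by apply: eq_bigr => K _; rewrite opprB.
Qed.

(* The [K]-th layer [C (N + K) \ C (N + K + 1)] is covered with slack
   [e d^(K+1)]; these slacks sum to less than [e]. *)
Lemma cover_sums_tail Y s N e : cover_sums Y s -> lcpos e ->
  exists s', cover_sums (Y `|` (C N `&` ~` Cinf)) s' /\ lcle s' (s + (m N - l) + e).
Proof.
move=> coverY ep; have [S0 [YS0 S0s]] := coverY.
pose Z K := ~` C (N + K.+1) `&` C (N + K).
pose gap K : LC R := m (N + K) - m (N + K.+1).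
have ZS K := outer_measure_approx
  (outer_measure_C_diff (leq_add (leqnn N) (leqnSn K))) (lcshift_pos K.+1 ep).
have [SK SKok] := choice ZS.
pose X K' := if K' is K.+1 then Z K else Y.
pose F K' := if K' is K.+1 then SK K else S0.
pose beta K' := if K' is K.+1 then gap K + lcshift K.+1 e else s.
have XF K' : is_cover (X K') (F K').
  by case: K' => [|K] //=; have [s1 [ZK _]] := SKok K.
have F_le_beta K' n : lcle (lcpsum (lengths (F K')) n) (beta K').
  case: K' => [|K] /=.
    exact: lcpsum_le_series (fun k => lengths_nneg k YS0) S0s n.
  have [s1 [ZK [SKs1 s1le]]] := SKok K.
  exact: lcle_trans (lcpsum_le_series (fun k => lengths_nneg k ZK) SKs1 n) s1le.
have beta_vanishes q : exists K0, forall K, (K0 <= K)%N -> vanishes_below q (beta K).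
  have [N1 hN1] := m_diff_vanishes q; have [K2 hK2] := lcshift_vanishes ep q.
  exists (maxn N1 K2).+1 => -[|K] //= hK.
  by apply: vanishes_belowD; [rewrite /gap; apply: hN1|apply: hK2]; lia.
have sum_beta_le D : lcle (\sum_(K < D) beta K) (s + (m N - l) + e).
  have s_ge0 := cover_sums_nneg coverY.
  case: D => [|D].
    rewrite big_ord0; apply/lcle0E/lcnnegD; last by right.
    by apply: lcnnegD => //; apply/lcleE; exact: l_le_m.
  rewrite big_ord_recl /=.
  have -> : \sum_(i < D) beta (lift ord0 i) =
      \sum_(K < D) gap K + \sum_(K < D) lcshift K.+1 e by rewrite -big_split.
  rewrite sum_m_gaps addrA; apply: lcleD; last exact: sum_lcshift_le.
  by apply: lcleD; [exact: lcle_refl|apply: lcle_sub2l; exact: l_le_m].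
have [s' [cover_s' s'le]] := cover_sums_bigcup XF F_le_beta beta_vanishes sum_beta_le.
exists s'; split => //; apply: cover_sums_sub cover_s'.
move=> x [Yx|[CNx nCx]]; first by exists 0%N.
by have [K [CKx nCKx]] := C_exit CNx nCx; exists K.+1.
Qed.

Section Split.
Variables (B : set (LC R)) (b : LC R) (c : nat -> LC R).
Hypothesis Bb : outer_measure B b.
Hypothesis CBc : forall N, outer_measure (C N `&` B) (c N).

Let nCBc N : outer_measure (~` C N `&` B) (b - c N).
Proof. exact: L_measurable_compl (C_measurable N) Bb (CBc N). Qed.

Lemma c_diff_bounds N K : (N <= K)%N ->
  lcnneg (c N - c K) /\ lcle (c N - c K) (m N - m K).
Proof.
move=> NK; have CBcK : outer_measure (C K `&` (C N `&` B)) (c K).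
  by rewrite setIA setI_C_decr //; exact: CBc.
have diff := L_measurable_compl (C_measurable K) (CBc N) CBcK.
split; first exact: outer_measure_nneg diff.
by apply: outer_measure_mono diff (outer_measure_C_diff NK) => x [nCKx [CNx _]].
Qed.

Lemma c_cauchy : lccauchy c.
Proof.
move=> q; have [N mq] := m_diff_vanishes q; exists N => n Nn.
have [c_ge0 c_le] := c_diff_bounds Nn.
rewrite -opprB; apply/vanishes_belowN/(vanishes_below_le c_ge0 c_le).
exact: mq.
Qed.

Variable L : LC R.
Hypothesis c_cvg : lcconverges c L.

Let tail_cvg : lcconverges (fun N => m N - l) 0.
Proof. by rewrite -(subrr l); apply: lcconvergesD (lcconverges_cst _). Qed.

Lemma outer_measure_Cinf : outer_measure (Cinf `&` B) L.
Proof.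
split=> [s cover_s|m' lb].
  apply: (@lcle_addpos _ 1) => e ep; rewrite mulr1n.
  apply: (@lcconverges_le _ c (fun N => s + (m N - l) + e)) => //; last first.
    by rewrite -[s in s + e]addr0; apply/lcconvergesD/lcconverges_cst/lcconvergesD;
      [exact: lcconverges_cst|exact: tail_cvg].
  exists 0%N => N _; have [s' [cover_s' s'le]] := cover_sums_tail N cover_s ep.
  apply: lcle_trans s'le; apply: outer_measure_le (CBc N) (cover_sums_sub _ cover_s').
  by move=> x [CNx Bx]; have [Cx|nCx] := pselect (Cinf x); [left|right].
apply: (@lcconverges_le _ (fun=> m') c) => //; last exact: lcconverges_cst.
exists 0%N => N _; apply: outer_measure_ge (CBc N) _ => s cover_s.
by apply/lb/(cover_sums_sub _ cover_s) => x [/Cinf_sub Cx Bx].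
Qed.

Lemma outer_measure_nCinf : outer_measure (~` Cinf `&` B) (b - L).
Proof.
have bc_cvg : lcconverges (fun N => b - c N) (b - L).
  exact: lcconvergesD (lcconverges_cst b) (lcconvergesN c_cvg).
split=> [s cover_s|m' lb].
  apply: lcconverges_le _ bc_cvg (lcconverges_cst s).
  exists 0%N => N _; apply: outer_measure_le (nCBc N) (cover_sums_sub _ cover_s).
  by move=> x [nCNx Bx]; split => // /(@Cinf_sub N).
apply: (@lcle_addpos _ 2) => e ep; rewrite mulr2n addrA.
apply: (@lcconverges_le _ (fun=> m') (fun N => (b - c N + e) + (m N - l) + e)) => //.
- exists 0%N => N _.
  have [S1 [s1 [cover1 [S1s1 s1le]]]] := outer_measure_approx (nCBc N) ep.
  have [s' [cover_s' s'le]] := cover_sums_tail N (ex_intro _ S1 (conj cover1 S1s1)) ep.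
  apply: lcle_trans (lb _ (cover_sums_sub _ cover_s')) _.
    by move=> x [nCx Bx]; have [CNx|nCNx] := pselect (C N x); [right|left].
  by apply: lcle_trans s'le _; do 2 apply: lcle_add2r.
- exact: lcconverges_cst.
- have -> : b - L + e + e = (b - L + e) + 0 + e by rewrite addr0.
  apply: lcconvergesD (lcconverges_cst e); apply: lcconvergesD tail_cvg.
  exact: lcconvergesD bc_cvg (lcconverges_cst e).
Qed.

End Split.

Lemma Cinf_split B b : outer_measure B b -> exists L,
  outer_measure (Cinf `&` B) L /\ outer_measure (~` Cinf `&` B) (b - L).
Proof.
move=> Bb; have measCB N := ((C_measurable N).2 B (ex_intro _ b Bb)).1.
have [c CBc] := choice measCB.
have [L c_cvg] := lccauchy_converges (c_cauchy CBc).
by exists L; split; [exact: outer_measure_Cinf|exact: outer_measure_nCinf].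
Qed.

End DecreasingIntersection.

Theorem mainTheorem20 (R : realType) (A : nat -> set (LC R)) :
  (forall n, L_measurable (A n)) ->
  (exists (m : nat -> LC R) (l : LC R),
      (forall N : nat, outer_measure (\bigcap_(n in `I_N.+1) A n) (m N)) /\
      lcconverges m l) ->
  L_measurable (\bigcap_n A n).
Proof.
move=> measA [m [l [Cm m_cvg]]].
apply: L_measurable_of_split => [B b /(Cinf_split measA Cm m_cvg) [L] splitB|].
  by exists L.
have [L [CinfL _]] := Cinf_split measA Cm m_cvg (Cm 0%N).
exists L; suff <- : \bigcap_n A n `&` \bigcap_(n in `I_1) A n = \bigcap_n A n by [].
by apply/setIidPl => x Ax n _; exact: Ax.
Qed.
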